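(* The Euclidean Archimedean solid $\{4,6,6\}$ (truncated octahedron) admits orientation-preserving face-pairing isometries, generated by two screw motions $\mathbf{u},\mathbf{v}$, such that the group $\mathbf{G}$ they generate acts freely on $\mathbf{E}^3$ with the truncated octahedron as fundamental domain (three copies meeting at each edge, the 12 edge classes each containing 3 edges, the 24 vertices falling into 6 classes of 4), so that $\mathbf{E}^3/\mathbf{G}$ is a compact orientable Euclidean space form. This group is the crystallographic space group no. 19, $P2_12_12_1$, and has the presentation $$\mathbf{G}=\langle \mathbf{u},\mathbf{v}\mid \mathbf{v}^2\mathbf{u}\mathbf{v}^2\mathbf{u}^{-1}=\mathbf{u}^2\mathbf{v}^{-1}\mathbf{u}^2\mathbf{v}=1\rangle.$$
   Context: The truncated octahedron $\{4,6,6\}$ has 6 squares and 8 regular hexagons, one square and two hexagons at each vertex; it tiles $\mathbf{E}^3$ face-to-face with three copies at every edge. $P2_12_12_1$ denotes the orthorhombic space group generated by three mutually perpendicular screw motions (twofold rotations composed with half-lattice translations) with non-intersecting axes, as in the International Tables for Crystallography. *)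

From Stdlib Require Import Reals List.
Open Scope R_scope.

Definition V3 : Type := (R * R * R)%type.
Definition vadd (p q : V3) : V3 :=
  let '(x1, y1, z1) := p in let '(x2, y2, z2) := q in (x1 + x2, y1 + y2, z1 + z2).
Definition vsub (p q : V3) : V3 :=
  let '(x1, y1, z1) := p in let '(x2, y2, z2) := q in (x1 - x2, y1 - y2, z1 - z2).
Definition vscale (t : R) (p : V3) : V3 :=
  let '(x, y, z) := p in (t * x, t * y, t * z).
Definition dot (p q : V3) : R :=
  let '(x1, y1, z1) := p in let '(x2, y2, z2) := q in x1 * x2 + y1 * y2 + z1 * z2.
Definition dist2 (p q : V3) : R := dot (vsub p q) (vsub p q).

Definition M3 : Type := (V3 * V3 * V3)%type.
Definition mapply (M : M3) (p : V3) : V3 :=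
  let '(r1, r2, r3) := M in (dot r1 p, dot r2 p, dot r3 p).
Definition det3 (M : M3) : R :=
  let '((a, b, c), (d, e, f), (g, h, i)) := M in
  a * (e * i - f * h) - b * (d * i - f * g) + c * (d * h - e * g).
Definition I3 : M3 := ((1, 0, 0), (0, 1, 0), (0, 0, 1)).

Definition is_rotation (M : M3) : Prop :=
  (forall p q, dot (mapply M p) (mapply M q) = dot p q) /\ det3 M = 1 /\ M <> I3.

Definition is_screw (f : V3 -> V3) : Prop :=
  exists (M : M3) (c d : V3) (t : R),
    is_rotation M /\ dot d d = 1 /\ mapply M d = d /\ t <> 0 /\
    forall x, f x = vadd (vadd (mapply M (vsub x c)) c) (vscale t d).

(** The truncated octahedron {4,6,6} (edge length sqrt 2), in its standard position:
    convex hull of the 24 permutations of (0, +-1, +-2); as an intersection of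
    half-spaces: |x|,|y|,|z| <= 2 (6 squares) and |x|+|y|+|z| <= 3 (8 hexagons). *)
Definition TO (p : V3) : Prop :=
  let '(x, y, z) := p in
  Rabs x <= 2 /\ Rabs y <= 2 /\ Rabs z <= 2 /\ Rabs x + Rabs y + Rabs z <= 3.
Definition TO_interior (p : V3) : Prop :=
  let '(x, y, z) := p in
  Rabs x < 2 /\ Rabs y < 2 /\ Rabs z < 2 /\ Rabs x + Rabs y + Rabs z < 3.

(** Vertices of TO: the permutations of (0, +-1, +-2). *)
Definition TO_vertex (p : V3) : Prop :=
  let '(x, y, z) := p in
  Rabs x + Rabs y + Rabs z = 3 /\ x * y * z = 0 /\ x * x + y * y + z * z = 5.
Definition TO_edge (p q : V3) : Prop :=
  TO_vertex p /\ TO_vertex q /\ dist2 p q = 2.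

(** Words in a set of generators A (letter (a, true) means a^-1), and their
    evaluation as composites of maps: [l1; ...; ln] evaluates to l1 o ... o ln. *)
Definition word (A : Type) : Type := list (A * bool).
Fixpoint evalW {A : Type} (f : A -> bool -> V3 -> V3) (w : word A) (x : V3) : V3 :=
  match w with
  | nil => x
  | (a, b) :: w' => f a b (evalW f w' x)
  end.

Inductive gen2 : Type := GU | GV.
Definition gens2 (u ui v vi : V3 -> V3) (a : gen2) (inv : bool) : V3 -> V3 :=
  match a, inv with
  | GU, false => u | GU, true => ui | GV, false => v | GV, true => vi
  end.

Definition rel1 : word gen2 :=
  (GV, false) :: (GV, false) :: (GU, false) :: (GV, false) :: (GV, false) :: (GU, true) :: nil.
Definition rel2 : word gen2 :=
  (GU, false) :: (GU, false) :: (GV, true) :: (GU, false) :: (GU, false) :: (GV, false) :: nil.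

(** Abstract groups, with a setoid equality (so that quotients such as F_2/N are
    groups in this sense). *)
Record Grp : Type := {
  gcar :> Type;
  geq : gcar -> gcar -> Prop;
  gmul : gcar -> gcar -> gcar;
  ginv : gcar -> gcar;
  gone : gcar;
  geq_refl : forall x, geq x x;
  geq_sym : forall x y, geq x y -> geq y x;
  geq_trans : forall x y z, geq x y -> geq y z -> geq x z;
  gmul_compat : forall x x' y y', geq x x' -> geq y y' -> geq (gmul x y) (gmul x' y');
  ginv_compat : forall x x', geq x x' -> geq (ginv x) (ginv x');
  gmulA : forall x y z, geq (gmul x (gmul y z)) (gmul (gmul x y) z);
  gmul1 : forall x, geq (gmul gone x) x;
  gmulV : forall x, geq (gmul (ginv x) x) gone
}.

Fixpoint evalH (H : Grp) (a b : gcar H) (w : word gen2) : gcar H :=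
  match w with
  | nil => gone H
  | (g, inv) :: w' =>
      gmul H (match g, inv with
              | GU, false => a | GU, true => ginv H a
              | GV, false => b | GV, true => ginv H b end)
           (evalH H a b w')
  end.

(** G = <u, v> has the presentation < u, v | rel1 = rel2 = 1 >: the relators are
    trivial in G, and every word trivial in G is trivial in every group in which
    the relators are trivial (i.e. ker(F_2 -> G) is the normal closure of the
    relators). *)
Definition has_presentation (u ui v vi : V3 -> V3) : Prop :=
  (forall x, evalW (gens2 u ui v vi) rel1 x = x) /\
  (forall x, evalW (gens2 u ui v vi) rel2 x = x) /\
  forall (H : Grp) (a b : gcar H),
    geq H (evalH H a b rel1) (gone H) -> geq H (evalH H a b rel2) (gone H) ->
    forall w : word gen2, (forall x, evalW (gens2 u ui v vi) w x = x) ->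
      geq H (evalH H a b w) (gone H).

(** The standard setting of the space group P2_1 2_1 2_1 (no. 19), International
    Tables, with the lattice normalised to Z^3 (this normalisation is absorbed by
    affine conjugacy): generated by the three screw motions
      (x+1/2, -y+1/2, -z), (-x, y+1/2, -z+1/2), (-x+1/2, -y, z+1/2). *)
Inductive gen3 : Type := S1 | S2 | S3.
Definition std19 (a : gen3) (inv : bool) (p : V3) : V3 :=
  let '(x, y, z) := p in
  match a, inv with
  | S1, false => (x + /2, - y + /2, - z)
  | S1, true  => (x - /2, - y + /2, - z)
  | S2, false => (- x, y + /2, - z + /2)
  | S2, true  => (- x, y - /2, - z + /2)
  | S3, false => (- x + /2, - y, z + /2)
  | S3, true  => (- x + /2, - y, z - /2)
  end.

Definition is_P212121 (u ui v vi : V3 -> V3) : Prop :=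
  exists (A : M3) (p : V3),
    det3 A <> 0 /\
    let phi := fun x => vadd (mapply A x) p in
    (forall w : word gen2, exists w' : word gen3,
        forall x, phi (evalW (gens2 u ui v vi) w x) = evalW std19 w' (phi x)) /\
    (forall w' : word gen3, exists w : word gen2,
        forall x, phi (evalW (gens2 u ui v vi) w x) = evalW std19 w' (phi x)).

From Stdlib Require Import Reals List Lra Lia ZArith Bool FinFun Setoid.
Import ListNotations.
Open Scope R_scope.

(* u and v are half-turn screws about the perpendicular skew axes {y = 1, z = -1} and
   {x = -1, z = 1}.  Their squares and (u v)^2 are the translations by (4, 0, 0),
   (0, 4, 0) and (0, 0, -8), and every element of G is uniquely such a lattice
   translation times one of 1, u, u^2 v, u v, whose linear parts form the Klein group
   of diagonal rotations.  Hence G acts simply transitively on the orbit of the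
   origin, the body-centred cubic lattice {2 n | n1 = n2 = n3 (mod 2)}, whose Voronoi
   cell is the truncated octahedron: this gives freeness and the fundamental domain,
   and the vertex and edge classes are then a finite computation on integer points.
   The same normal form, derived in an arbitrary group from the two relators alone,
   shows that every word acting trivially is a consequence of the relators. *)

Definition screw_u (p : V3) : V3 := let '(x, y, z) := p in (x + 2, - y + 2, - z - 2).
Definition screw_u_inv (p : V3) : V3 := let '(x, y, z) := p in (x - 2, - y + 2, - z - 2).
Definition screw_v (p : V3) : V3 := let '(x, y, z) := p in (- x - 2, y + 2, - z + 2).
Definition screw_v_inv (p : V3) : V3 := let '(x, y, z) := p in (- x - 2, y - 2, - z + 2).

Definition gen_act : gen2 -> bool -> V3 -> V3 :=
  gens2 screw_u screw_u_inv screw_v screw_v_inv.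

Lemma V3_eq (a b c a' b' c' : R) : a = a' -> b = b' -> c = c' -> (a, b, c) = (a', b', c').
Proof. intros -> -> ->; reflexivity. Qed.

Lemma V3_inj (a b c a' b' c' : R) : (a, b, c) = (a', b', c') -> a = a' /\ b = b' /\ c = c'.
Proof. intros E; inversion E; auto. Qed.

Hint Rewrite plus_IZR minus_IZR mult_IZR opp_IZR : IZR_push.
Ltac V3_ring := apply V3_eq; autorewrite with IZR_push; ring.

Lemma screw_u_is_screw : is_screw screw_u.
Proof.
  exists ((1, 0, 0), (0, -1, 0), (0, 0, -1)), (0, 1, -1), (1, 0, 0), 2.
  repeat split.
  - intros [[a b] c] [[d e] f]; cbv [dot mapply]; ring.
  - cbv [det3]; ring.
  - intros E; inversion E; lra.
  - cbv [dot]; ring.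
  - cbv [mapply dot]; V3_ring.
  - lra.
  - intros [[x y] z]; cbv [screw_u vadd mapply vsub dot vscale]; V3_ring.
Qed.

Lemma screw_v_is_screw : is_screw screw_v.
Proof.
  exists ((-1, 0, 0), (0, 1, 0), (0, 0, -1)), (-1, 0, 1), (0, 1, 0), 2.
  repeat split.
  - intros [[a b] c] [[d e] f]; cbv [dot mapply]; ring.
  - cbv [det3]; ring.
  - intros E; inversion E; lra.
  - cbv [dot]; ring.
  - cbv [mapply dot]; V3_ring.
  - lra.
  - intros [[x y] z]; cbv [screw_v vadd mapply vsub dot vscale]; V3_ring.
Qed.

Lemma screw_u_invK x : screw_u (screw_u_inv x) = x /\ screw_u_inv (screw_u x) = x.
Proof. destruct x as [[x y] z]; cbv [screw_u screw_u_inv]; split; V3_ring. Qed.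

Lemma screw_v_invK x : screw_v (screw_v_inv x) = x /\ screw_v_inv (screw_v x) = x.
Proof. destruct x as [[x y] z]; cbv [screw_v screw_v_inv]; split; V3_ring. Qed.

Lemma evalW_app {A : Type} (f : A -> bool -> V3 -> V3) (w1 w2 : word A) x :
  evalW f (w1 ++ w2) x = evalW f w1 (evalW f w2 x).
Proof. induction w1 as [|[a b] w1 IH]; simpl; [reflexivity | now rewrite IH]. Qed.

(** * G as a group of affine maps *)

Inductive klein : Type := K1 | Kx | Ky | Kz.

(* [Elt k A B C] is (u^2)^A (v^2)^B ((u v)^2)^C r_k, where the coset representative
   r_k is 1, u, u^2 v or u v for k = K1, Kx, Ky, Kz; [etrans] is its translation part. *)
Record elt : Type := Elt { erot : klein; ea : Z; eb : Z; ec : Z }.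

Definition elt1 : elt := Elt K1 0 0 0.

Definition krot (k : klein) (p : V3) : V3 :=
  let '(x, y, z) := p in
  match k with
  | K1 => (x, y, z) | Kx => (x, - y, - z) | Ky => (- x, y, - z) | Kz => (- x, - y, z)
  end.

Definition etrans (e : elt) : Z * Z * Z :=
  let 'Elt k A B C := e in
  match k with
  | K1 => (4 * A, 4 * B, -8 * C)
  | Kx => (4 * A + 2, 4 * B + 2, -8 * C - 2)
  | Ky => (4 * A + 2, 4 * B + 2, -8 * C + 2)
  | Kz => (4 * A, 4 * B, -8 * C - 4)
  end%Z.

Definition IZR3 (p : Z * Z * Z) : V3 := let '(a, b, c) := p in (IZR a, IZR b, IZR c).

Definition act (e : elt) (p : V3) : V3 := vadd (krot (erot e) p) (IZR3 (etrans e)).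

Definition lmul_u (e : elt) : elt :=
  let 'Elt k A B C := e in
  match k with
  | K1 => Elt Kx A (- B) (- C) | Kx => Elt K1 (A + 1) (- B) (- C)
  | Ky => Elt Kz (A + 1) (- B) (- C) | Kz => Elt Ky A (- B) (- C)
  end%Z.
Definition lmul_v (e : elt) : elt :=
  let 'Elt k A B C := e in
  match k with
  | K1 => Elt Ky (- A - 1) B (- C) | Kx => Elt Kz (- A - 1) (B + 1) (- C - 1)
  | Ky => Elt K1 (- A - 1) (B + 1) (- C) | Kz => Elt Kx (- A - 1) B (- C - 1)
  end%Z.

(* u^-1 = u^-2 u and v^-1 = v^-2 v. *)
Definition lmul (a : gen2) (inv : bool) (e : elt) : elt :=
  match a, inv with
  | GU, false => lmul_u e
  | GU, true => let 'Elt k A B C := lmul_u e in Elt k (A - 1) B C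
  | GV, false => lmul_v e
  | GV, true => let 'Elt k A B C := lmul_v e in Elt k A (B - 1) C
  end%Z.

Fixpoint elt_of_word (w : word gen2) : elt :=
  match w with nil => elt1 | (a, inv) :: w' => lmul a inv (elt_of_word w') end.

Ltac unfold_act := cbv beta iota zeta delta [act krot etrans vadd IZR3 erot].

Lemma act1 p : act elt1 p = p.
Proof. destruct p as [[x y] z]; cbv [elt1]; unfold_act; V3_ring. Qed.

Lemma act_lmul a inv e p : gen_act a inv (act e p) = act (lmul a inv e) p.
Proof.
  destruct e as [k A B C], p as [[x y] z].
  destruct a, inv, k;
    cbv beta iota zeta delta [gen_act gens2 screw_u screw_u_inv screw_v screw_v_inv
                              lmul lmul_u lmul_v];
    unfold_act; V3_ring.
Qed.

Lemma act_elt_of_word w p : evalW gen_act w p = act (elt_of_word w) p.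
Proof.
  induction w as [|[a inv] w IH]; simpl.
  - now rewrite act1.
  - now rewrite IH, act_lmul.
Qed.

Definition translation_word (w wi : word gen2) (k : Z) : word gen2 :=
  if (0 <=? k)%Z then concat (repeat w (Z.to_nat k)) else concat (repeat wi (Z.to_nat (- k))).

Definition coset_word (k : klein) : word gen2 :=
  match k with
  | K1 => [] | Kx => [(GU, false)]
  | Ky => [(GU, false); (GU, false); (GV, false)] | Kz => [(GU, false); (GV, false)]
  end.

Definition word_of_elt (e : elt) : word gen2 :=
  let 'Elt k A B C := e in
  translation_word [(GU, false); (GU, false)] [(GU, true); (GU, true)] A ++
  translation_word [(GV, false); (GV, false)] [(GV, true); (GV, true)] B ++
  translation_word [(GU, false); (GV, false); (GU, false); (GV, false)]
                   [(GV, true); (GU, true); (GV, true); (GU, true)] C ++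
  coset_word k.

Lemma evalW_repeat_translation w t n p :
  (forall q, evalW gen_act w q = vadd q t) ->
  evalW gen_act (concat (repeat w n)) p = vadd p (vscale (INR n) t).
Proof.
  intros Hw; induction n as [|n IH]; simpl concat.
  - destruct p as [[x y] z], t as [[a b] c]; simpl; V3_ring.
  - rewrite evalW_app, IH, Hw, S_INR.
    destruct p as [[x y] z], t as [[a b] c]; simpl; V3_ring.
Qed.

Lemma evalW_translation_word w wi t k p :
  (forall q, evalW gen_act w q = vadd q t) ->
  (forall q, evalW gen_act wi q = vadd q (vscale (-1) t)) ->
  evalW gen_act (translation_word w wi k) p = vadd p (vscale (IZR k) t).
Proof.
  intros Hw Hwi; unfold translation_word; destruct (Z.leb_spec 0 k).
  - rewrite (evalW_repeat_translation _ _ _ _ Hw), INR_IZR_INZ, Z2Nat.id by lia.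
    reflexivity.
  - rewrite (evalW_repeat_translation _ _ _ _ Hwi), INR_IZR_INZ, Z2Nat.id by lia.
    destruct p as [[x y] z], t as [[a b] c]; simpl; V3_ring.
Qed.

Ltac unfold_words :=
  cbv beta iota zeta delta [evalW gen_act gens2 screw_u screw_u_inv screw_v screw_v_inv
                            vadd vscale coset_word].

Lemma act_word_of_elt e p : evalW gen_act (word_of_elt e) p = act e p.
Proof.
  destruct e as [k A B C]; unfold word_of_elt; rewrite !evalW_app.
  rewrite (evalW_translation_word _ _ (4, 0, 0)), (evalW_translation_word _ _ (0, 4, 0)),
    (evalW_translation_word _ _ (0, 0, -8));
    try (intros [[x y] z]; unfold_words; V3_ring).
  destruct p as [[x y] z], k; unfold_words; unfold_act; V3_ring.
Qed.

(** * Free action and fundamental domain *)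

Lemma act_fixed_point e p : act e p = p -> e = elt1.
Proof.
  destruct e as [k A B C], p as [[x y] z].
  destruct k; unfold_act; intros E; apply V3_inj in E as [E1 [E2 E3]].
  - assert (IZR (4 * A) = 0 /\ IZR (4 * B) = 0 /\ IZR (-8 * C) = 0) as [EA [EB EC]] by lra.
    apply eq_IZR_R0 in EA, EB, EC; cbv [elt1]; f_equal; lia.
  - assert (IZR (4 * A + 2) = 0) as E by lra; apply eq_IZR_R0 in E; lia.
  - assert (IZR (4 * B + 2) = 0) as E by lra; apply eq_IZR_R0 in E; lia.
  - assert (IZR (-8 * C - 4) = 0) as E by lra; apply eq_IZR_R0 in E; lia.
Qed.

Lemma TO_krot k p : TO p -> TO (krot k p).
Proof. destruct p as [[x y] z], k; simpl; rewrite ?Rabs_Ropp; auto. Qed.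

Lemma act_from_fixed_origin e q :
  act e (IZR3 q) = (0, 0, 0) -> forall p, act e p = krot (erot e) (vsub p (IZR3 q)).
Proof.
  destruct e as [k A B C], q as [[a b] c]; intros E [[x y] z].
  destruct k; unfold_act; cbv [vsub] in *; apply V3_inj in E; apply V3_eq; lra.
Qed.

Lemma IZR_add_eq0 a b : (a + b = 0)%Z -> IZR a + IZR b = 0.
Proof. intros E; rewrite <- plus_IZR, E; reflexivity. Qed.

Lemma IZR_sub_eq0 a b : (b - a = 0)%Z -> - IZR a + IZR b = 0.
Proof. intros E; rewrite <- opp_IZR, <- plus_IZR, Z.add_opp_l, E; reflexivity. Qed.

Lemma bcc_point_to_origin n1 n2 n3 :
  (n1 mod 2 = n3 mod 2)%Z -> (n2 mod 2 = n3 mod 2)%Z ->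
  exists e, act e (IZR3 (2 * n1, 2 * n2, 2 * n3)%Z) = (0, 0, 0).
Proof.
  intros P1 P2.
  assert (Hm : (n3 mod 4 = 0 \/ n3 mod 4 = 1 \/ n3 mod 4 = 2 \/ n3 mod 4 = 3)%Z)
    by (pose proof (Z.mod_pos_bound n3 4); lia).
  destruct Hm as [Hm|[Hm|[Hm|Hm]]];
    [ exists (Elt K1 (- (n1 / 2)) (- (n2 / 2)) (n3 / 4))
    | exists (Elt Ky ((n1 - 1) / 2) ((- n2 - 1) / 2) ((1 - n3) / 4))
    | exists (Elt Kz (n1 / 2) (n2 / 2) ((n3 - 2) / 4))
    | exists (Elt Kx ((- n1 - 1) / 2) ((n2 - 1) / 2) ((- 1 - n3) / 4)) ];
    unfold_act; cbv [IZR3]; apply V3_eq;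
    first [apply IZR_add_eq0 | apply IZR_sub_eq0]; Z.div_mod_to_equations; lia.
Qed.

Lemma nearest_multiple_of_4 (y : R) : exists m : Z, -2 <= y - 4 * IZR m <= 2.
Proof.
  destruct (archimed (y / 4 + 1 / 2)) as [H1 H2].
  exists (up (y / 4 + 1 / 2) - 1)%Z; rewrite minus_IZR; simpl; lra.
Qed.

Lemma reflect_through_2 (a : R) : -2 <= a <= 2 ->
  exists s : Z, (s = 1 \/ s = -1)%Z /\ Rabs (a - 2 * IZR s) = 2 - Rabs a.
Proof.
  intros Ha; destruct (Rle_dec 0 a).
  - exists 1%Z; split; [now left | simpl; split_Rabs; lra].
  - exists (-1)%Z; split; [now right | simpl; split_Rabs; lra].
Qed.

(* Round every coordinate to a multiple of 4; if the remainder lies beyond the hexagon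
   faces, the remainder relative to the nearest point of 2 (odd, odd, odd) lies in TO. *)
Lemma TO_bcc_cover p : exists n1 n2 n3 : Z,
  (n1 mod 2 = n3 mod 2)%Z /\ (n2 mod 2 = n3 mod 2)%Z /\
  TO (vsub p (IZR3 (2 * n1, 2 * n2, 2 * n3)%Z)).
Proof.
  destruct p as [[x y] z].
  destruct (nearest_multiple_of_4 x) as [m1 H1], (nearest_multiple_of_4 y) as [m2 H2],
    (nearest_multiple_of_4 z) as [m3 H3].
  destruct (Rle_dec (Rabs (x - 4 * IZR m1) + Rabs (y - 4 * IZR m2) + Rabs (z - 4 * IZR m3)) 3).
  - exists (2 * m1)%Z, (2 * m2)%Z, (2 * m3)%Z.
    split; [|split]; [Z.div_mod_to_equations; lia .. |].
    cbv [vsub IZR3 TO]; autorewrite with IZR_push.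
    replace (x - 2 * (2 * IZR m1)) with (x - 4 * IZR m1) by ring.
    replace (y - 2 * (2 * IZR m2)) with (y - 4 * IZR m2) by ring.
    replace (z - 2 * (2 * IZR m3)) with (z - 4 * IZR m3) by ring.
    repeat split; try (split_Rabs; lra); lra.
  - destruct (reflect_through_2 _ H1) as [s1 [Hs1 E1]],
      (reflect_through_2 _ H2) as [s2 [Hs2 E2]], (reflect_through_2 _ H3) as [s3 [Hs3 E3]].
    exists (2 * m1 + s1)%Z, (2 * m2 + s2)%Z, (2 * m3 + s3)%Z.
    split; [|split]; [Z.div_mod_to_equations; lia .. |].
    cbv [vsub IZR3 TO]; autorewrite with IZR_push.
    replace (x - 2 * (2 * IZR m1 + IZR s1)) with (x - 4 * IZR m1 - 2 * IZR s1) by ring.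
    replace (y - 2 * (2 * IZR m2 + IZR s2)) with (y - 4 * IZR m2 - 2 * IZR s2) by ring.
    replace (z - 2 * (2 * IZR m3 + IZR s3)) with (z - 4 * IZR m3 - 2 * IZR s3) by ring.
    rewrite E1, E2, E3; repeat split; try (split_Rabs; lra); lra.
Qed.

Lemma TO_cover p : exists e, TO (act e p).
Proof.
  destruct (TO_bcc_cover p) as [n1 [n2 [n3 [P1 [P2 HT]]]]].
  destruct (bcc_point_to_origin n1 n2 n3 P1 P2) as [e He].
  exists e; rewrite (act_from_fixed_origin _ _ He); now apply TO_krot.
Qed.

Lemma Z_shift_bound (q : R) (k : Z) : Rabs q < 2 -> Rabs (q + IZR k) < 2 ->
  (Z.abs k < 4)%Z /\ IZR (Z.abs k) <= Rabs q + Rabs (q + IZR k).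
Proof.
  intros H1 H2; rewrite abs_IZR.
  assert (Rabs (IZR k) <= Rabs q + Rabs (q + IZR k)) by (split_Rabs; lra).
  split; [apply lt_IZR; rewrite abs_IZR; simpl; lra | assumption].
Qed.

Lemma TO_interior_krot_shift k p a b c :
  TO_interior p -> TO_interior (vadd (krot k p) (IZR3 (a, b, c))) ->
  (Z.abs a < 4 /\ Z.abs b < 4 /\ Z.abs c < 4 /\ Z.abs a + Z.abs b + Z.abs c < 6)%Z.
Proof.
  destruct p as [[x y] z]; intros [Hx [Hy [Hz Hxyz]]] Hk.
  destruct (krot k (x, y, z)) as [[x' y'] z'] eqn:E; simpl in Hk.
  assert (Hp' : Rabs x' + Rabs y' + Rabs z' < 3 /\ Rabs x' < 2 /\ Rabs y' < 2 /\ Rabs z' < 2)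
    by (destruct k; simpl in E; inversion E; subst; rewrite ?Rabs_Ropp; lra).
  destruct Hk as [Ha [Hb [Hc Habc]]], Hp' as [Hxyz' [Hx' [Hy' Hz']]].
  destruct (Z_shift_bound x' a), (Z_shift_bound y' b), (Z_shift_bound z' c); auto.
  repeat split; auto.
  apply lt_IZR; autorewrite with IZR_push; lra.
Qed.

(* A nonidentity element of G has a translation coordinate of absolute value at least
   4, or translation coordinates of absolute values summing to at least 6. *)
Lemma act_interior e p : TO_interior p -> TO_interior (act e p) -> e = elt1.
Proof.
  destruct e as [k A B C]; unfold act; simpl erot; intros Hp He.
  destruct k; cbv [etrans] in He;
    destruct (TO_interior_krot_shift _ _ _ _ _ Hp He) as [Ha [Hb [Hc Habc]]]; try lia.
  cbv [elt1]; f_equal; lia.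
Qed.

Lemma gen_act_free w x : evalW gen_act w x = x -> forall y, evalW gen_act w y = y.
Proof.
  intros Hx y; rewrite act_elt_of_word in *.
  now rewrite (act_fixed_point _ _ Hx), act1.
Qed.

Lemma TO_cover_by_words x : exists w, TO (evalW gen_act w x).
Proof.
  destruct (TO_cover x) as [e He]; exists (word_of_elt e); now rewrite act_word_of_elt.
Qed.

Lemma TO_interior_words w x :
  TO_interior x -> TO_interior (evalW gen_act w x) -> forall y, evalW gen_act w y = y.
Proof.
  intros Hx Hw y; rewrite act_elt_of_word in *.
  now rewrite (act_interior _ _ Hx Hw), act1.
Qed.

(** * Vertex and edge classes *)

Lemma exists_class_list {X Y : Type} (X_eq_dec : forall x y : X, {x = y} + {x <> y})
  (emb : X -> Y) (P : Y -> Prop) (Rel : Y -> Y -> Prop) (L : list X)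
  (rel : X -> X -> bool) (n : nat) :
  Injective emb ->
  (forall y, P y <-> exists k, In k L /\ y = emb k) ->
  (forall k k', rel k k' = true <-> Rel (emb k) (emb k')) ->
  forallb (fun k => length (nodup X_eq_dec (filter (rel k) L)) =? n)%nat L = true ->
  forall y, P y ->
  exists l, NoDup l /\ length l = n /\ forall y', P y' /\ Rel y y' <-> In y' l.
Proof.
  intros Hinj HP Hrel Hcheck y Hy; apply HP in Hy as [k [Hk ->]].
  rewrite forallb_forall in Hcheck; specialize (Hcheck k Hk); apply Nat.eqb_eq in Hcheck.
  exists (map emb (nodup X_eq_dec (filter (rel k) L))); split; [|split].
  - apply Injective_map_NoDup; [exact Hinj | apply NoDup_nodup].
  - now rewrite length_map.
  - intros y'; rewrite in_map_iff; split.
    + intros [Hy' HR]; apply HP in Hy' as [k' [Hk' ->]].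
      exists k'; rewrite nodup_In, filter_In, Hrel; auto.
    + intros [k' [<- Hk']]; rewrite nodup_In, filter_In, Hrel in Hk'.
      split; [apply HP; exists k' |]; tauto.
Qed.

Notation Z3 := (Z * Z * Z)%type.

Definition Z3_eq_dec (p q : Z3) : {p = q} + {p <> q}.
Proof. repeat decide equality. Defined.

Definition Z3_eqb (p q : Z3) : bool := if Z3_eq_dec p q then true else false.

Lemma Z3_eqb_eq p q : Z3_eqb p q = true <-> p = q.
Proof. unfold Z3_eqb; destruct (Z3_eq_dec p q); split; congruence. Qed.

Lemma IZR3_inj : Injective IZR3.
Proof.
  intros [[a b] c] [[a' b'] c'] E; apply V3_inj in E as [E1 [E2 E3]].
  apply eq_IZR in E1, E2, E3; now subst.
Qed.

Definition krotZ (k : klein) (p : Z3) : Z3 :=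
  let '(x, y, z) := p in
  match k with
  | K1 => (x, y, z) | Kx => (x, - y, - z) | Ky => (- x, y, - z) | Kz => (- x, - y, z)
  end%Z.

Definition addZ3 (p q : Z3) : Z3 :=
  let '(a, b, c) := p in let '(a', b', c') := q in (a + a', b + b', c + c')%Z.

Definition subZ3 (p q : Z3) : Z3 :=
  let '(a, b, c) := p in let '(a', b', c') := q in (a - a', b - b', c - c')%Z.

Definition actZ (e : elt) (p : Z3) : Z3 := addZ3 (krotZ (erot e) p) (etrans e).

Lemma act_IZR3 e p : act e (IZR3 p) = IZR3 (actZ e p).
Proof.
  destruct e as [k A B C], p as [[x y] z], k;
    cbv beta iota zeta delta [actZ addZ3 krotZ]; unfold_act; V3_ring.
Qed.

(* The element with linear part k sending p to q, provided there is one. *)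
Definition elt_sending (k : klein) (p q : Z3) : elt :=
  let '(d1, d2, d3) := subZ3 q (actZ (Elt k 0 0 0) p) in
  Elt k (d1 / 4) (d2 / 4) (- (d3 / 8)).

Lemma elt_sending_actZ e p : elt_sending (erot e) p (actZ e p) = e.
Proof.
  destruct e as [k A B C], p as [[x y] z], k;
    cbv beta iota zeta delta [elt_sending actZ addZ3 subZ3 krotZ etrans erot];
    f_equal; Z.div_mod_to_equations; lia.
Qed.

Definition carriesb (p1 p2 q1 q2 : Z3) : bool :=
  existsb (fun k => let e := elt_sending k p1 q1 in
                    Z3_eqb (actZ e p1) q1 && Z3_eqb (actZ e p2) q2) [K1; Kx; Ky; Kz].

Lemma carriesb_elt p1 p2 q1 q2 :
  carriesb p1 p2 q1 q2 = true <-> exists e, actZ e p1 = q1 /\ actZ e p2 = q2.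
Proof.
  unfold carriesb; rewrite existsb_exists; split.
  - intros [k [_ Hk]]; rewrite andb_true_iff, !Z3_eqb_eq in Hk; eauto.
  - intros [e [<- <-]]; exists (erot e); split.
    + destruct (erot e); simpl; tauto.
    + now rewrite elt_sending_actZ, andb_true_iff, !Z3_eqb_eq.
Qed.

Lemma carriesb_word p1 p2 q1 q2 :
  carriesb p1 p2 q1 q2 = true <->
  exists w, evalW gen_act w (IZR3 p1) = IZR3 q1 /\ evalW gen_act w (IZR3 p2) = IZR3 q2.
Proof.
  rewrite carriesb_elt; split.
  - intros [e [E1 E2]]; exists (word_of_elt e).
    now rewrite !act_word_of_elt, !act_IZR3, E1, E2.
  - intros [w [E1 E2]]; exists (elt_of_word w).
    rewrite !act_elt_of_word, !act_IZR3 in *; split; now apply IZR3_inj.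
Qed.

Definition coord_range : list Z := [-2; -1; 0; 1; 2]%Z.

Definition is_vertexb (p : Z3) : bool :=
  let '(a, b, c) := p in
  (Z.abs a + Z.abs b + Z.abs c =? 3)%Z && (a * b * c =? 0)%Z && (a * a + b * b + c * c =? 5)%Z.

Definition TO_vertices : list Z3 :=
  filter is_vertexb (list_prod (list_prod coord_range coord_range) coord_range).

Lemma in_TO_vertices k : In k TO_vertices <-> is_vertexb k = true.
Proof.
  unfold TO_vertices; rewrite filter_In; split; [tauto|]; intros Hv; split; auto.
  destruct k as [[a b] c]; simpl in Hv; rewrite !andb_true_iff, !Z.eqb_eq in Hv.
  assert (Hr : forall t, (-2 <= t <= 2)%Z -> In t coord_range)
    by (intros t Ht; assert (t = -2 \/ t = -1 \/ t = 0 \/ t = 1 \/ t = 2)%Z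
          as [-> | [-> | [-> | [-> | ->]]]] by lia; simpl; tauto).
  rewrite !in_prod_iff; repeat split; apply Hr; nia.
Qed.

Lemma TO_vertex_IZR3 k : TO_vertex (IZR3 k) <-> is_vertexb k = true.
Proof.
  destruct k as [[a b] c]; unfold TO_vertex, IZR3, is_vertexb.
  rewrite !Rabs_Zabs, <- !plus_IZR, <- !mult_IZR, <- !plus_IZR.
  rewrite !andb_true_iff, !Z.eqb_eq; split.
  - intros [E1 [E2 E3]]; apply eq_IZR in E1, E2, E3; tauto.
  - intros [[-> ->] ->]; tauto.
Qed.

Lemma abs_1_or_2_integer (t : R) : Rabs t = 1 \/ Rabs t = 2 -> exists k : Z, t = IZR k.
Proof.
  intros [E|E]; destruct (Rle_dec 0 t);
    [exists 1%Z | exists (-1)%Z | exists 2%Z | exists (-2)%Z];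
    revert E; simpl; split_Rabs; lra.
Qed.

Lemma vertex_coords_integer y z :
  Rabs y + Rabs z = 3 -> y * y + z * z = 5 -> (exists b : Z, y = IZR b) /\ exists c : Z, z = IZR c.
Proof.
  intros E1 E2.
  assert (Hy : (Rabs y - 1) * (Rabs y - 2) = 0) by (split_Rabs; nra).
  apply Rmult_integral in Hy; split; apply abs_1_or_2_integer; lra.
Qed.

Lemma TO_vertex_integral p : TO_vertex p -> exists k, p = IZR3 k.
Proof.
  destruct p as [[x y] z]; intros [E1 [E2 E3]].
  apply Rmult_integral in E2 as [E2 | ->]; [apply Rmult_integral in E2 as [-> | ->] |];
    rewrite Rabs_R0 in E1.
  - destruct (vertex_coords_integer y z) as [[b ->] [c ->]]; [lra .. |].
    now exists (0, b, c)%Z.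
  - destruct (vertex_coords_integer x z) as [[a ->] [c ->]]; [lra .. |].
    now exists (a, 0, c)%Z.
  - destruct (vertex_coords_integer x y) as [[a ->] [b ->]]; [lra .. |].
    now exists (a, b, 0)%Z.
Qed.

Lemma TO_vertex_iff p : TO_vertex p <-> exists k, In k TO_vertices /\ p = IZR3 k.
Proof.
  split.
  - intros Hp; destruct (TO_vertex_integral p Hp) as [k ->].
    exists k; split; auto; now apply in_TO_vertices, TO_vertex_IZR3.
  - intros [k [Hk ->]]; now apply TO_vertex_IZR3, in_TO_vertices.
Qed.

Definition dist2Z (p q : Z3) : Z :=
  let '(a, b, c) := p in let '(a', b', c') := q in
  ((a - a') * (a - a') + (b - b') * (b - b') + (c - c') * (c - c'))%Z.

Lemma dist2_IZR3 p q : dist2 (IZR3 p) (IZR3 q) = IZR (dist2Z p q).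
Proof.
  destruct p as [[a b] c], q as [[a' b'] c'].
  cbv beta iota zeta delta [dist2 dot vsub IZR3 dist2Z]; autorewrite with IZR_push; ring.
Qed.

Definition TO_edges : list (Z3 * Z3) :=
  filter (fun k => dist2Z (fst k) (snd k) =? 2)%Z (list_prod TO_vertices TO_vertices).

Definition IZR3_pair (k : Z3 * Z3) : V3 * V3 := (IZR3 (fst k), IZR3 (snd k)).

Lemma IZR3_pair_inj : Injective IZR3_pair.
Proof.
  intros [k1 k2] [k1' k2'] E; injection E as E1 E2.
  apply IZR3_inj in E1, E2; now subst.
Qed.

Lemma TO_edge_iff q : TO_edge (fst q) (snd q) <-> exists k, In k TO_edges /\ q = IZR3_pair k.
Proof.
  destruct q as [q1 q2]; unfold TO_edge; cbn [fst snd]; split.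
  - intros [H1 [H2 H3]]; apply TO_vertex_iff in H1 as [k1 [Hk1 ->]], H2 as [k2 [Hk2 ->]].
    exists (k1, k2); split; auto.
    apply filter_In; split; [now apply in_prod|].
    rewrite dist2_IZR3 in H3; apply eq_IZR in H3; cbn [fst snd]; now rewrite H3.
  - intros [[k1 k2] [Hk E]]; injection E as -> ->.
    apply filter_In in Hk as [Hk Hd]; apply in_prod_iff in Hk as [Hk1 Hk2].
    rewrite dist2_IZR3; apply Z.eqb_eq in Hd; cbn [fst snd] in Hd; rewrite Hd.
    split; [|split]; auto; apply TO_vertex_iff; eauto.
Qed.

Definition Z3_pair_eq_dec (p q : Z3 * Z3) : {p = q} + {p <> q}.
Proof. repeat decide equality. Defined.

Lemma vertex_classes p : TO_vertex p ->
  exists l : list V3, NoDup l /\ length l = 4%nat /\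
    forall q, (TO_vertex q /\ exists w, evalW gen_act w p = q) <-> In q l.
Proof.
  apply (exists_class_list Z3_eq_dec IZR3 TO_vertex
           (fun p q => exists w, evalW gen_act w p = q) TO_vertices
           (fun k k' => carriesb k k k' k')).
  - exact IZR3_inj.
  - exact TO_vertex_iff.
  - intros k k'; rewrite carriesb_word; firstorder.
  - vm_compute; reflexivity.
Qed.

Lemma edge_classes p1 p2 : TO_edge p1 p2 ->
  exists l : list (V3 * V3), NoDup l /\ length l = 6%nat /\
    forall q1 q2,
      (TO_edge q1 q2 /\ exists w,
         (evalW gen_act w p1 = q1 /\ evalW gen_act w p2 = q2) \/
         (evalW gen_act w p1 = q2 /\ evalW gen_act w p2 = q1))
      <-> In (q1, q2) l.
Proof.
  set (rel k k' := carriesb (fst k) (snd k) (fst k') (snd k') ||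
                   carriesb (fst k) (snd k) (snd k') (fst k')).
  set (Rel p q := exists w,
         (evalW gen_act w (fst p) = fst q /\ evalW gen_act w (snd p) = snd q) \/
         (evalW gen_act w (fst p) = snd q /\ evalW gen_act w (snd p) = fst q)).
  assert (Hrel : forall k k', rel k k' = true <-> Rel (IZR3_pair k) (IZR3_pair k'))
    by (intros k k'; unfold rel, Rel; rewrite orb_true_iff, !carriesb_word; firstorder).
  intros Hp.
  destruct (exists_class_list Z3_pair_eq_dec IZR3_pair (fun q => TO_edge (fst q) (snd q))
              Rel TO_edges rel 6 IZR3_pair_inj TO_edge_iff Hrel ltac:(vm_compute; reflexivity)
              (p1, p2) Hp) as [l [Hl [Hlen Hin]]].
  exists l; split; [|split]; auto; intros q1 q2; exact (Hin (q1, q2)).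
Qed.

(** * The space group P2_1 2_1 2_1 *)

(* The affine map (x, y, z) |-> ((x + 1) / 4, y / 4, (z + 1) / 8) conjugates u and v
   to the first two standard generators and (u v)^-1 to the third. *)
Definition std_coords (x : V3) : V3 :=
  vadd (mapply ((/4, 0, 0), (0, /4, 0), (0, 0, /8)) x) (/4, 0, /8).

Definition gen2_to_gen3 (l : gen2 * bool) : gen3 * bool :=
  match l with (GU, b) => (S1, b) | (GV, b) => (S2, b) end.

Definition gen3_to_word (l : gen3 * bool) : word gen2 :=
  match l with
  | (S1, b) => [(GU, b)]
  | (S2, b) => [(GV, b)]
  | (S3, false) => [(GV, true); (GU, true)]
  | (S3, true) => [(GU, false); (GV, false)]
  end.

Ltac unfold_std :=
  cbv beta iota zeta delta [std_coords vadd mapply dot std19 gen_act gens2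
                            screw_u screw_u_inv screw_v screw_v_inv evalW].

Lemma std_coords_gen_act a b x :
  std_coords (gen_act a b x) = std19 (fst (gen2_to_gen3 (a, b))) (snd (gen2_to_gen3 (a, b)))
                                     (std_coords x).
Proof. destruct x as [[x y] z], a, b; unfold_std; simpl; apply V3_eq; field. Qed.

Lemma std_coords_gen3_to_word l x :
  std_coords (evalW gen_act (gen3_to_word l) x) = std19 (fst l) (snd l) (std_coords x).
Proof. destruct x as [[x y] z], l as [[] []]; unfold_std; simpl; apply V3_eq; field. Qed.

Lemma std_coords_evalW w x :
  std_coords (evalW gen_act w x) = evalW std19 (map gen2_to_gen3 w) (std_coords x).
Proof.
  induction w as [|[a b] w IH]; [reflexivity|].
  simpl; rewrite std_coords_gen_act, IH; now destruct a.
Qed.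

Lemma std_coords_evalW_std19 w' x :
  std_coords (evalW gen_act (flat_map gen3_to_word w') x) = evalW std19 w' (std_coords x).
Proof.
  induction w' as [|l w' IH]; [reflexivity|].
  simpl; rewrite evalW_app, std_coords_gen3_to_word, IH; now destruct l.
Qed.

Lemma screws_P212121 : is_P212121 screw_u screw_u_inv screw_v screw_v_inv.
Proof.
  exists ((/4, 0, 0), (0, /4, 0), (0, 0, /8)), (/4, 0, /8); split; [|split].
  - cbv [det3]; intros E; field_simplify in E; lra.
  - intros w; exists (map gen2_to_gen3 w); apply std_coords_evalW.
  - intros w'; exists (flat_map gen3_to_word w'); apply std_coords_evalW_std19.
Qed.

(** * The presentation *)

Close Scope R_scope.

Add Parametric Relation (H : Grp) : (gcar H) (geq H)
  reflexivity proved by (geq_refl H) symmetry proved by (geq_sym H)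
  transitivity proved by (geq_trans H) as geq_rel.
Add Parametric Morphism (H : Grp) : (gmul H) with signature
  (geq H) ==> (geq H) ==> (geq H) as gmul_morphism.
Proof. intros; now apply gmul_compat. Qed.
Add Parametric Morphism (H : Grp) : (ginv H) with signature
  (geq H) ==> (geq H) as ginv_morphism.
Proof. intros; now apply ginv_compat. Qed.

Ltac reassoc := repeat rewrite <- gmulA.

Section GroupTheory.
Variable H : Grp.
Local Infix "*" := (gmul H).
Local Infix "==" := (geq H) (at level 70).
Local Notation "x ^-1" := (ginv H x) (at level 2).
Local Notation one := (gone H).

Lemma mulgV x : x * x^-1 == one.
Proof.
  rewrite <- (gmul1 H (x * x^-1)), <- (gmulV H (x^-1)) at 1.
  reassoc; rewrite (gmulA H (x^-1) x (x^-1)), gmulV, gmul1; apply gmulV.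
Qed.
Lemma mulg1 x : x * one == x.
Proof. rewrite <- (gmulV H x), gmulA, mulgV; apply gmul1. Qed.
Lemma mulKg x y : x^-1 * (x * y) == y.
Proof. rewrite gmulA, gmulV; apply gmul1. Qed.
Lemma mulKVg x y : x * (x^-1 * y) == y.
Proof. rewrite gmulA, mulgV; apply gmul1. Qed.
Lemma invg_unique x y : x * y == one -> y == x^-1.
Proof. intros E; rewrite <- (mulKg x y), E; apply mulg1. Qed.
Lemma invgK x : (x^-1)^-1 == x.
Proof. symmetry; apply invg_unique, gmulV. Qed.

Lemma conj_invg g h k : g * h == k * g -> g * h^-1 == k^-1 * g.
Proof.
  intros E; rewrite <- (mulKg k (g * h^-1)); apply gmul_compat; [reflexivity|].
  rewrite gmulA, <- E; reassoc; rewrite mulgV, mulg1; reflexivity.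
Qed.

Lemma mulgA_congr x y x' y' : x * y == x' * y' -> forall z, x * (y * z) == x' * (y' * z).
Proof. intros E z; rewrite !gmulA, E; reflexivity. Qed.

Lemma conj_invg_of_fix g h : h * (g * h) == g -> g * h == h^-1 * g.
Proof. intros E; rewrite <- (mulKg h (g * h)), E; reflexivity. Qed.

Fixpoint expg (g : gcar H) (n : nat) : gcar H :=
  match n with O => one | S n => g * expg g n end.

Definition zexpg (g : gcar H) (n : Z) : gcar H :=
  if (0 <=? n)%Z then expg g (Z.to_nat n) else expg (g^-1) (Z.to_nat (- n)).

Lemma expg_compat g g' n : g == g' -> expg g n == expg g' n.
Proof. intros E; induction n; simpl; [reflexivity | now apply gmul_compat]. Qed.

Lemma zexpg0 g : zexpg g 0 == one. Proof. reflexivity. Qed.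
Lemma zexpg1 g : zexpg g 1 == g. Proof. apply mulg1. Qed.
Lemma zexpgN1 g : zexpg g (-1) == g^-1. Proof. apply mulg1. Qed.

Lemma zexpgS g n : zexpg g (n + 1) == g * zexpg g n.
Proof.
  unfold zexpg; destruct (Z.leb_spec 0 n), (Z.leb_spec 0 (n + 1)); try lia.
  - now replace (Z.to_nat (n + 1)) with (S (Z.to_nat n)) by lia.
  - replace n with (-1)%Z by lia; simpl; rewrite mulg1; symmetry; apply mulgV.
  - replace (Z.to_nat (- n)) with (S (Z.to_nat (- (n + 1)))) by lia.
    simpl; symmetry; apply mulKVg.
Qed.

Lemma zexpgP g n : zexpg g (n - 1) == g^-1 * zexpg g n.
Proof.
  replace n with ((n - 1) + 1)%Z at 2 by lia.
  rewrite zexpgS; symmetry; apply mulKg.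
Qed.

Lemma Z_ind_step (P : Z -> Prop) :
  P 0%Z -> (forall n, P n -> P (n + 1)%Z) -> (forall n, P n -> P (n - 1)%Z) ->
  forall n, P n.
Proof.
  intros H0 HS HP n; induction n using Z.peano_ind; auto.
  - now apply HS in IHn.
  - apply HP in IHn; now replace (Z.pred n) with (n - 1)%Z by lia.
Qed.

Lemma zexpgD g m n : zexpg g (m + n) == zexpg g m * zexpg g n.
Proof.
  revert m; apply Z_ind_step.
  - symmetry; apply gmul1.
  - intros m IH; replace (m + 1 + n)%Z with ((m + n) + 1)%Z by lia.
    rewrite !zexpgS, IH; apply gmulA.
  - intros m IH; replace (m - 1 + n)%Z with ((m + n) - 1)%Z by lia.
    rewrite !zexpgP, IH; apply gmulA.
Qed.

Lemma zexpgV g n : zexpg (g^-1) n == zexpg g (- n).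
Proof.
  unfold zexpg; destruct (Z.leb_spec 0 n), (Z.leb_spec 0 (- n)).
  - now replace n with 0%Z by lia.
  - now replace (Z.to_nat (- - n)) with (Z.to_nat n) by lia.
  - apply expg_compat, invgK.
  - lia.
Qed.

Lemma conj_zexpg g h k n : g * h == k * g -> g * zexpg h n == zexpg k n * g.
Proof.
  intros E; pose proof (conj_invg _ _ _ E) as E'; revert n; apply Z_ind_step.
  - rewrite !zexpg0, mulg1, gmul1; reflexivity.
  - intros n IH; rewrite !zexpgS, gmulA, E; reassoc; rewrite IH; reflexivity.
  - intros n IH; rewrite !zexpgP, gmulA, E'; reassoc; rewrite IH; reflexivity.
Qed.

Lemma commute_zexpg g h m n : g * h == h * g -> zexpg g m * zexpg h n == zexpg h n * zexpg g m.
Proof.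
  intros E; symmetry; apply conj_zexpg; symmetry; now apply conj_zexpg.
Qed.

End GroupTheory.

Section Presentation.
Variable H : Grp.
Local Infix "*" := (gmul H).
Local Infix "==" := (geq H) (at level 70).
Local Notation "x ^-1" := (ginv H x) (at level 2).
Local Notation one := (gone H).
Variables a b : gcar H.
Hypothesis rel1_trivial : evalH H a b rel1 == one.
Hypothesis rel2_trivial : evalH H a b rel2 == one.

(* Images of the translations u^2, v^2 and (u v)^2.  A lemma [x_y] moves x across y:
   it rewrites [x * y] as [y' * x]. *)
Definition ta := a * a.
Definition tb := b * b.
Definition ab := a * b.
Definition tc := ab * ab.

Lemma fold_ta z : a * (a * z) == ta * z. Proof. unfold ta; rewrite gmulA; reflexivity. Qed.
Lemma fold_tb z : b * (b * z) == tb * z. Proof. unfold tb; rewrite gmulA; reflexivity. Qed.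

Lemma a_tb : a * tb == tb^-1 * a.
Proof.
  apply conj_invg_of_fix; rewrite <- (gmul1 H a) at 2; rewrite <- rel1_trivial.
  unfold tb; simpl; reassoc; rewrite gmul1, gmulV, mulg1; reflexivity.
Qed.

Lemma b_ta : b * ta == ta^-1 * b.
Proof.
  assert (E : b^-1 * (ta * b) == ta^-1).
  { apply invg_unique; rewrite <- rel2_trivial; unfold ta; simpl; reassoc.
    rewrite mulg1; reflexivity. }
  apply conj_invg_of_fix; rewrite gmulA, <- (mulKVg H b (ta * b)), E.
  reassoc; rewrite gmulV, mulg1; reflexivity.
Qed.

Lemma a_ta : a * ta == ta * a. Proof. unfold ta; reassoc; reflexivity. Qed.
Lemma b_tb : b * tb == tb * b. Proof. unfold tb; reassoc; reflexivity. Qed.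
Lemma a_tbV : a * tb^-1 == tb * a.
Proof. rewrite (conj_invg _ _ _ _ a_tb), invgK; reflexivity. Qed.
Lemma a_taV : a * ta^-1 == ta^-1 * a. Proof. apply conj_invg, a_ta. Qed.
Lemma b_tbV : b * tb^-1 == tb^-1 * b. Proof. apply conj_invg, b_tb. Qed.

Lemma ta_tb : ta * tb == tb * ta.
Proof. unfold ta at 1; rewrite <- gmulA, a_tb, gmulA, a_tbV, <- gmulA; reflexivity. Qed.
Lemma tb_taV : tb * ta^-1 == ta^-1 * tb. Proof. apply conj_invg; symmetry; apply ta_tb. Qed.
Lemma ta_tbV : ta * tb^-1 == tb^-1 * ta. Proof. apply conj_invg, ta_tb. Qed.

Lemma ab_ta : ab * ta == ta^-1 * ab.
Proof. unfold ab; rewrite <- gmulA, b_ta, gmulA, a_taV; reassoc; reflexivity. Qed.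
Lemma ab_tb : ab * tb == tb^-1 * ab.
Proof. unfold ab; rewrite <- gmulA, b_tb, gmulA, a_tb; reassoc; reflexivity. Qed.
Lemma tc_ta : tc * ta == ta * tc.
Proof.
  unfold tc; rewrite <- gmulA, ab_ta, gmulA, (conj_invg _ _ _ _ ab_ta), invgK.
  reassoc; reflexivity.
Qed.
Lemma tc_tb : tc * tb == tb * tc.
Proof.
  unfold tc; rewrite <- gmulA, ab_tb, gmulA, (conj_invg _ _ _ _ ab_tb), invgK.
  reassoc; reflexivity.
Qed.

Lemma a_tc : a * tc == tc^-1 * a.
Proof.
  apply conj_invg_of_fix; unfold tc, ab; reassoc.
  rewrite (fold_ta (b * (a * b))), (mulgA_congr H _ _ _ _ b_ta), (mulgA_congr H _ _ _ _ a_taV),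
    fold_tb, (mulgA_congr H _ _ _ _ a_tb), fold_ta, <- (mulgA_congr H _ _ _ _ ta_tbV), mulKg,
    (mulgA_congr H _ _ _ _ b_tbV).
  change (b * b) with tb; rewrite gmulV, mulg1; reflexivity.
Qed.

Lemma b_tc : b * tc == tc^-1 * b.
Proof.
  apply conj_invg_of_fix; unfold tc, ab; reassoc.
  rewrite (fold_tb (a * (b * (a * b)))), (mulgA_congr H _ _ _ _ a_tb), fold_ta,
    (mulgA_congr H _ _ _ _ b_tbV), (mulgA_congr H _ _ _ _ b_ta), fold_tb,
    <- (mulgA_congr H _ _ _ _ tb_taV), mulKg, (mulgA_congr H _ _ _ _ a_taV), fold_ta, mulKg.
  reflexivity.
Qed.

Definition trans (A B C : Z) := zexpg H ta A * (zexpg H tb B * zexpg H tc C).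

Lemma trans_mul A B C A' B' C' :
  trans A B C * trans A' B' C' == trans (A + A') (B + B') (C + C').
Proof.
  unfold trans; rewrite !zexpgD; reassoc.
  rewrite (mulgA_congr H _ _ _ _ (commute_zexpg H tc ta C A' tc_ta)),
    (mulgA_congr H _ _ _ _ (commute_zexpg H tb ta B A' (geq_sym _ _ _ ta_tb))),
    (mulgA_congr H _ _ _ _ (commute_zexpg H tc tb C B' tc_tb)).
  reflexivity.
Qed.

Lemma trans_mul_shift A B C d1 d2 d3 g A' B' C' :
  (A + d1 = A')%Z -> (B + d2 = B')%Z -> (C + d3 = C')%Z ->
  trans A B C * (trans d1 d2 d3 * g) == trans A' B' C' * g.
Proof. intros <- <- <-; rewrite gmulA, trans_mul; reflexivity. Qed.

Lemma trans0 : trans 0 0 0 == one.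
Proof. unfold trans; rewrite !zexpg0, !gmul1; reflexivity. Qed.
Lemma trans_ta : trans 1 0 0 == ta.
Proof. unfold trans; rewrite zexpg1, !zexpg0, !gmul1, mulg1; reflexivity. Qed.
Lemma trans_taV : trans (-1) 0 0 == ta^-1.
Proof. unfold trans; rewrite zexpgN1, !zexpg0, !gmul1, mulg1; reflexivity. Qed.
Lemma trans_tb : trans 0 1 0 == tb.
Proof. unfold trans; rewrite zexpg1, !zexpg0, !gmul1, mulg1; reflexivity. Qed.
Lemma trans_tbV : trans 0 (-1) 0 == tb^-1.
Proof. unfold trans; rewrite zexpgN1, !zexpg0, !gmul1, mulg1; reflexivity. Qed.
Lemma trans_tcV : trans 0 0 (-1) == tc^-1.
Proof. unfold trans; rewrite zexpgN1, !zexpg0, !gmul1; reflexivity. Qed.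

Lemma a_trans A B C : a * trans A B C == trans A (- B) (- C) * a.
Proof.
  unfold trans; rewrite gmulA, (conj_zexpg H _ _ _ A a_ta); reassoc.
  apply gmul_compat; [reflexivity|].
  rewrite gmulA, (conj_zexpg H _ _ _ B a_tb), zexpgV; reassoc.
  apply gmul_compat; [reflexivity|].
  rewrite (conj_zexpg H _ _ _ C a_tc), zexpgV; reflexivity.
Qed.

Lemma b_trans A B C : b * trans A B C == trans (- A) B (- C) * b.
Proof.
  unfold trans; rewrite gmulA, (conj_zexpg H _ _ _ A b_ta), zexpgV; reassoc.
  apply gmul_compat; [reflexivity|].
  rewrite gmulA, (conj_zexpg H _ _ _ B b_tb); reassoc.
  apply gmul_compat; [reflexivity|].
  rewrite (conj_zexpg H _ _ _ C b_tc), zexpgV; reflexivity.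
Qed.

Lemma invg_a : a^-1 == ta^-1 * a.
Proof.
  symmetry; apply invg_unique; rewrite gmulA, a_taV; reassoc.
  change (a * a) with ta; apply gmulV.
Qed.
Lemma invg_b : b^-1 == tb^-1 * b.
Proof.
  symmetry; apply invg_unique; rewrite gmulA, b_tbV; reassoc.
  change (b * b) with tb; apply gmulV.
Qed.

Lemma b_mul_ab : b * ab == ta^-1 * (tc^-1 * a).
Proof.
  assert (E : b * ab == a^-1 * tc).
  { unfold tc; rewrite <- (mulKg H a (b * ab)); apply gmul_compat; [reflexivity|].
    unfold ab at 2; reassoc; reflexivity. }
  rewrite E, invg_a, <- gmulA, a_tc; reflexivity.
Qed.

Lemma b_mul_a : b * a == ta^-1 * (tc^-1 * (tb * ab)).
Proof.
  transitivity ((b * ab) * b^-1).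
  { unfold ab; reassoc; rewrite mulgV, mulg1; reflexivity. }
  rewrite b_mul_ab, invg_b; reassoc; rewrite (mulgA_congr H _ _ _ _ a_tbV); reflexivity.
Qed.

Definition coset_rep (k : klein) : gcar H :=
  match k with K1 => one | Kx => a | Ky => ta * b | Kz => ab end.
Definition elt_image (e : elt) : gcar H :=
  let 'Elt k A B C := e in trans A B C * coset_rep k.

Lemma a_elt_image e : a * elt_image e == elt_image (lmul_u e).
Proof.
  destruct e as [k A B C]; unfold elt_image, lmul_u.
  rewrite gmulA, a_trans; reassoc; destruct k; simpl.
  - rewrite mulg1; reflexivity.
  - change (a * a) with ta; rewrite <- (mulg1 H ta), <- trans_ta.
    apply trans_mul_shift; lia.
  - rewrite (mulgA_congr H _ _ _ _ a_ta), <- trans_ta; apply trans_mul_shift; lia.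
  - unfold ab; rewrite fold_ta; reflexivity.
Qed.

Lemma b_elt_image e : b * elt_image e == elt_image (lmul_v e).
Proof.
  destruct e as [k A B C]; unfold elt_image, lmul_v.
  rewrite gmulA, b_trans; reassoc; destruct k; simpl.
  - rewrite mulg1, <- (mulKg H ta b) at 1; rewrite <- trans_taV.
    apply trans_mul_shift; lia.
  - rewrite b_mul_a, <- trans_taV, <- trans_tcV, <- trans_tb, gmulA, trans_mul, gmulA, trans_mul.
    apply trans_mul_shift; lia.
  - rewrite (mulgA_congr H _ _ _ _ b_ta); change (b * b) with tb; rewrite <- (mulg1 H tb).
    rewrite gmulA, <- trans_taV, <- trans_tb, trans_mul; apply trans_mul_shift; lia.
  - rewrite b_mul_ab, <- trans_taV, <- trans_tcV, gmulA, trans_mul; apply trans_mul_shift; lia.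
Qed.

Definition letter (g : gen2) (inv : bool) : gcar H :=
  match g, inv with
  | GU, false => a | GU, true => a^-1 | GV, false => b | GV, true => b^-1
  end.

Lemma letter_elt_image g inv e : letter g inv * elt_image e == elt_image (lmul g inv e).
Proof.
  destruct g, inv; simpl; [| apply a_elt_image | | apply b_elt_image].
  - rewrite invg_a; reassoc; rewrite a_elt_image.
    destruct (lmul_u e) as [k A B C]; simpl.
    rewrite <- trans_taV; apply trans_mul_shift; lia.
  - rewrite invg_b; reassoc; rewrite b_elt_image.
    destruct (lmul_v e) as [k A B C]; simpl.
    rewrite <- trans_tbV; apply trans_mul_shift; lia.
Qed.

Lemma evalH_elt_of_word w : evalH H a b w == elt_image (elt_of_word w).
Proof.
  induction w as [|[g inv] w IH]; simpl.
  - rewrite trans0, gmul1; reflexivity.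
  - rewrite IH; exact (letter_elt_image g inv (elt_of_word w)).
Qed.

End Presentation.

Open Scope R_scope.

Lemma screws_presentation : has_presentation screw_u screw_u_inv screw_v screw_v_inv.
Proof.
  split; [|split].
  - intros [[x y] z]; cbv [evalW rel1 gens2 screw_u screw_u_inv screw_v screw_v_inv]; V3_ring.
  - intros [[x y] z]; cbv [evalW rel2 gens2 screw_u screw_u_inv screw_v screw_v_inv]; V3_ring.
  - intros H a b Hrel1 Hrel2 w Hw.
    assert (E : elt_of_word w = elt1)
      by (apply (act_fixed_point _ (0, 0, 0)); rewrite <- act_elt_of_word; apply Hw).
    rewrite (evalH_elt_of_word H a b Hrel1 Hrel2 w), E.
    cbv [elt_image elt1 coset_rep]; rewrite trans0; apply gmul1.
Qed.

Theorem mainTheorem2 :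
  exists u ui v vi : V3 -> V3,
    is_screw u /\ is_screw v /\
    (forall x, u (ui x) = x /\ ui (u x) = x) /\
    (forall x, v (vi x) = x /\ vi (v x) = x) /\
    let g := fun w : word gen2 => evalW (gens2 u ui v vi) w in
    (forall w x, g w x = x -> forall y, g w y = y) /\
    (forall x, exists w, TO (g w x)) /\
    (forall w x, TO_interior x -> TO_interior (g w x) -> forall y, g w y = y) /\
    (forall p, TO_vertex p ->
       exists l : list V3, NoDup l /\ length l = 4%nat /\
         forall q, (TO_vertex q /\ exists w, g w p = q) <-> In q l) /\
    (forall p1 p2, TO_edge p1 p2 ->
       exists l : list (V3 * V3), NoDup l /\ length l = 6%nat /\
         forall q1 q2,
           (TO_edge q1 q2 /\ exists w,
              (g w p1 = q1 /\ g w p2 = q2) \/ (g w p1 = q2 /\ g w p2 = q1))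
           <-> In (q1, q2) l) /\
    is_P212121 u ui v vi /\
    has_presentation u ui v vi.
Proof.
  exists screw_u, screw_u_inv, screw_v, screw_v_inv.
  exact (conj screw_u_is_screw (conj screw_v_is_screw (conj screw_u_invK (conj screw_v_invK
          (conj gen_act_free (conj TO_cover_by_words (conj TO_interior_words
          (conj vertex_classes (conj edge_classes
          (conj screws_P212121 screws_presentation)))))))))).
Qed.
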